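(* Let $G$ be a $\gamma_t$-critical graph of order $n$ with $\gamma_t(G)=n-\Delta(G)$ and $\delta(G)\ge 2$. Then $G$ is connected.
   Context: All graphs are finite and simple; $\Delta(G)$, $\delta(G)$ are maximum and minimum degree. A set $S\subseteq V(G)$ is a total dominating set if every vertex of $G$ is adjacent to some vertex of $S$; $\gamma_t(G)$ is the minimum size of such a set. A leaf is a vertex of degree one. A graph $G$ with no isolated vertex is $\gamma_t$-critical if for every vertex $v$ not adjacent to a leaf, $\gamma_t(G-v)<\gamma_t(G)$. *)

(* Subgraphs induced on a vertex set
   V : {set T} are used to talk about G - v (= induced on [set: T] :\ v). *)
From mathcomp Require Import all_boot all_order.
Set Implicit Arguments. Unset Strict Implicit. Unset Printing Implicit Defensive.

Definition simple_graph (T : finType) (e : rel T) : Prop :=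
  symmetric e /\ irreflexive e.

Definition nbhd (T : finType) (e : rel T) (V : {set T}) (x : T) : {set T} :=
  [set y in V | e x y].
Definition deg (T : finType) (e : rel T) (V : {set T}) (x : T) : nat :=
  #|nbhd e V x|.

(* max / min degree of the graph induced on V (V assumed nonempty) *)
Definition maxdeg (T : finType) (e : rel T) (V : {set T}) : nat :=
  \max_(x in V) deg e V x.
Definition mindeg (T : finType) (e : rel T) (V : {set T}) : nat :=
  \big[minn/#|T|]_(x in V) deg e V x.

Definition is_tds (T : finType) (e : rel T) (V S : {set T}) : bool :=
  (S \subset V) && [forall x in V, exists y in S, e x y].

(* total domination number; if no TDS exists (isolated vertex) the value
   is #|T|.+1, strictly larger than any possible size of a TDS *)
Definition gamma_t (T : finType) (e : rel T) (V : {set T}) : nat :=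
  \big[minn/#|T|.+1]_(S : {set T} | is_tds e V S) #|S|.

Definition is_leaf (T : finType) (e : rel T) (x : T) : bool :=
  deg e [set: T] x == 1.

Definition no_isolated (T : finType) (e : rel T) : Prop :=
  forall x : T, 0 < deg e [set: T] x.

Definition gt_critical (T : finType) (e : rel T) : Prop :=
  no_isolated e /\
  forall v : T, ~~ [exists u, e v u && is_leaf e u] ->
    gamma_t e ([set: T] :\ v) < gamma_t e [set: T].

Definition connected_graph (T : finType) (e : rel T) : Prop :=
  forall x y : T, connect e x y.

From mathcomp Require Import all_boot all_order.

Set Implicit Arguments.
Unset Strict Implicit.
Unset Printing Implicit Defensive.

(* Let v have maximum degree Δ and let W be the set of vertices outside the
   closed neighbourhood of v, so |W| = n - Δ - 1.  As δ ≥ 2 there are no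
   leaves, hence v is critical: some total dominating set S of G - v is
   smaller than γ_t(G), and then S cannot meet N(v).  If some x0 were not
   connected to v, then (W \ {x0}) ∪ {u}, for any neighbour u of v, would
   be a total dominating set of G of size n - Δ - 1 < γ_t(G): vertices of
   the component of v are dominated by S ⊆ W, the others by one of their
   (at least two) neighbours other than x0. *)

Section BigMinn.
Variables (I : finType) (P : pred I) (F : I -> nat) (d : nat).

Lemma bigminn_le i : P i -> \big[minn/d]_(j | P j) F j <= F i.
Proof.
move=> Pi; have : i \in index_enum I by rewrite mem_index_enum.
elim: (index_enum I) => [|j s IHs] //; rewrite inE big_cons.
case/orP => [/eqP<-|i_s]; first by rewrite Pi geq_minl.
by case: (P j); [apply: leq_trans (geq_minr _ _) _|]; apply: IHs.
Qed.

Lemma bigminn_attained : \big[minn/d]_(j | P j) F j < d ->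
  exists2 i, P i & \big[minn/d]_(j | P j) F j = F i.
Proof.
pose Q k := k = d \/ exists2 i, P i & k = F i.
have : Q (\big[minn/d]_(j | P j) F j).
  apply: big_ind => [|x y Qx Qy|i Pi]; [by left| |by right; exists i].
  by case: leqP.
by case=> [->|//]; rewrite ltnn.
Qed.

End BigMinn.

Lemma card_setD1U1_le (T : finType) (A : {set T}) x u :
  x \in A -> #|A :\ x :|: [set u]| <= #|A|.
Proof.
move=> xA; rewrite (leq_trans (leq_card_setU _ _)) // cards1 addn1.
by rewrite [#|A|](cardsD1 x) xA.
Qed.

Section Graph.
Variables (T : finType) (e : rel T).

Definition closed_nbhd (v : T) : {set T} := v |: nbhd e [set: T] v.

Lemma mindeg_le_deg (V : {set T}) x : x \in V -> mindeg e V <= deg e V x.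
Proof. exact: bigminn_le. Qed.

Lemma maxdeg_attained (V : {set T}) x :
  x \in V -> exists2 v, v \in V & maxdeg e V = deg e V v.
Proof.
move=> xV; have [|v vV maxE] := @eq_bigmax_cond _ (mem V) (deg e V).
  by apply/card_gt0P; exists x.
by exists v.
Qed.

Lemma no_leaf u : 2 <= mindeg e [set: T] -> ~~ is_leaf e u.
Proof.
move=> mindeg2; have := leq_trans mindeg2 (mindeg_le_deg (in_setT u)).
by rewrite /is_leaf; case: eqP => // ->.
Qed.

Lemma gamma_t_le_tds V S : is_tds e V S -> gamma_t e V <= #|S|.
Proof. exact: bigminn_le. Qed.

Lemma gamma_t_attained V : gamma_t e V <= #|T| ->
  exists2 S, is_tds e V S & #|S| = gamma_t e V.
Proof.
move=> le_n.
have [S tdsS eqS] :=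
  @bigminn_attained _ (is_tds e V) (fun S => #|S|) #|T|.+1 le_n.
by exists S; rewrite // /gamma_t eqS.
Qed.

Lemma tds_setT : no_isolated e -> is_tds e [set: T] [set: T].
Proof.
move=> noiso; rewrite /is_tds subxx; apply/forall_inP => x _.
have /card_gt0P[y] := noiso x; rewrite inE => /andP[_ exy].
by apply/exists_inP; exists y; rewrite ?in_setT.
Qed.

Lemma gamma_t_le_card : no_isolated e -> gamma_t e [set: T] <= #|T|.
Proof. by move/tds_setT/gamma_t_le_tds; rewrite cardsT. Qed.

Lemma tds_setD1_nbhd V S v : is_tds e (V :\ v) S ->
  [exists w in S, e v w] -> is_tds e V S.
Proof.
case/andP=> sSVv /forall_inP domS domv; rewrite /is_tds.
rewrite (subset_trans sSVv) ?subsetDl //=; apply/forall_inP => x xV.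
by case: (eqVneq x v) => [->//|xv]; apply: domS; rewrite !inE xv.
Qed.

Lemma critical_tds_avoids_closed_nbhd v :
  gamma_t e ([set: T] :\ v) < gamma_t e [set: T] <= #|T| ->
  exists2 S, is_tds e ([set: T] :\ v) S & S \subset ~: closed_nbhd v.
Proof.
case/andP=> crit le_n.
have [S tdsS cardS] := gamma_t_attained (ltnW (leq_trans crit le_n)).
exists S => //; apply/subsetP => w wS; rewrite !inE negb_or.
have /andP[/subsetP sSVv _] := tdsS.
have := sSVv w wS; rewrite !inE andbT => -> /=.
apply/negP => evw; have /gamma_t_le_tds : is_tds e [set: T] S.
  by apply: tds_setD1_nbhd tdsS _; apply/exists_inP; exists w.
by rewrite cardS leqNgt crit.
Qed.

Lemma card_outside_closed_nbhd v : irreflexive e ->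
  #|~: closed_nbhd v| + (deg e [set: T] v).+1 = #|T|.
Proof.
move=> irr; rewrite -[#|T|](cardsC (closed_nbhd v)) addnC cardsU1.
by rewrite {1}/nbhd inE irr andbF.
Qed.

Lemma unreachable_outside_closed_nbhd v z :
  ~~ connect e v z -> z \in ~: closed_nbhd v.
Proof.
apply: contraR; rewrite inE negbK !inE => /orP[/eqP->|/andP[_ evz]].
  exact: connect0.
exact: connect1.
Qed.

Hypothesis sym : symmetric e.

Lemma tds_from_unreachable v u x0 S :
  (forall z, 2 <= deg e [set: T] z) -> e v u -> ~~ connect e v x0 ->
  is_tds e ([set: T] :\ v) S -> S \subset ~: closed_nbhd v ->
  is_tds e [set: T] ((~: closed_nbhd v) :\ x0 :|: [set u]).
Proof.
move=> deg2 evu not_vx0 /andP[_ /forall_inP domS] /subsetP sSW.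
rewrite /is_tds subsetT; apply/forall_inP => z _.
case: (eqVneq z v) => [->|zv].
  by apply/exists_inP; exists u; rewrite // !inE eqxx orbT.
apply/exists_inP; case: (boolP (connect e v z)) => [vz|not_vz].
  have /exists_inP[w wS ezw] : [exists w in S, e z w].
    by apply: domS; rewrite !inE zv.
  exists w => //; rewrite in_setU in_setD1 sSW // andbT; apply/orP; left.
  apply: contraNneq not_vx0 => <-.
  exact: connect_trans vz (connect1 ezw).
have [w] : exists w, w \in nbhd e [set: T] z :\ x0.
  apply/card_gt0P; move: (deg2 z); rewrite /deg (cardsD1 x0).
  by case: (_ \in _); rewrite ?add1n ?add0n // => /ltnW.
rewrite !inE => /andP[wx0 /andP[_ ezw]]; exists w => //.
rewrite in_setU in_setD1 wx0 unreachable_outside_closed_nbhd //.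
apply: contra not_vz => vw.
by apply: connect_trans vw (connect1 _); rewrite sym.
Qed.

End Graph.

Theorem mainTheorem3 (T : finType) (e : rel T) :
  simple_graph e ->
  gt_critical e ->
  gamma_t e [set: T] = #|T| - maxdeg e [set: T] ->
  2 <= mindeg e [set: T] ->
  connected_graph e.
Proof.
move=> [sym irr] [noiso crit] gammaE mindeg2 x y.
have deg2 z : 2 <= deg e [set: T] z.
  exact: leq_trans mindeg2 (mindeg_le_deg e (in_setT z)).
have [v _ maxdegE] := maxdeg_attained e (in_setT x).
suff conn_v z : connect e v z.
  by apply: connect_trans (conn_v y); rewrite (sym_connect_sym sym) conn_v.
apply/idPn => not_vz.
have [u] : exists u, u \in nbhd e [set: T] v.
  by apply/card_gt0P; exact: ltnW (deg2 v).
rewrite inE => /andP[_ evu].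
have crit_v : gamma_t e ([set: T] :\ v) < gamma_t e [set: T] <= #|T|.
  rewrite gamma_t_le_card // andbT; apply: crit; apply/existsPn => w.
  by rewrite (negbTE (no_leaf w mindeg2)) andbF.
have [S tdsS sSW] := critical_tds_avoids_closed_nbhd crit_v.
have := gamma_t_le_tds (tds_from_unreachable sym deg2 evu not_vz tdsS sSW).
move/leq_trans/(_ (card_setD1U1_le u (unreachable_outside_closed_nbhd not_vz))).
rewrite gammaE maxdegE -(card_outside_closed_nbhd v irr).
by rewrite addnS subSn ?leq_addl // addnK ltnn.
Qed.
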